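(* Let $p,q,s$ be complex numbers with $p\neq0$, $q\neq 0$, $s^2\neq -1$. Let $\tilde A$ be the unital complex algebra generated by $\xi,\eta,\zeta,U,V,Z$ subject to the relations $$\zeta\xi=q^2\xi\zeta,\quad \eta\zeta=q^2\zeta\eta,\quad \xi U=pU\xi,\quad V\xi=p\xi V,\quad \eta V=pV\eta,\quad U\eta=p\eta U,$$ $$UV=VU,\quad U\zeta=\zeta U,\quad V\zeta=\zeta V,$$ $$\xi\eta=(\zeta-1)(\zeta+s^2)+UV,\qquad \eta\xi=(q^2\zeta-1)(q^2\zeta+s^2)+UV,$$ with $Z$ central and $Z^2=UV$. Let $$\tilde e=\frac{1}{2(1+s^2)}\begin{pmatrix}1+s^2+2Z&0&1-s^2-2\zeta&2\xi\\ 0&1+s^2+2Z&-2\eta&s^2-1+2q^2\zeta\\ 1-s^2-2\zeta&2\xi&1+s^2-2Z&0\\ -2\eta&s^2-1+2q^2\zeta&0&1+s^2-2Z\end{pmatrix}\in\mathrm{Mat}_4(\tilde A),$$ and let $\tilde E$ be the projective module defined by $\tilde e$. Then $ch_k(\tilde E)=0$ for all $k=0,1,2,\ldots$.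
   Context: For a projector $e=(e_{ij})\in\mathrm{Mat}_N(A)$ over a unital algebra $A$, the components of its Chern–Connes character are $$ch_n(E)=c_n\sum_{i_1,\dots,i_{2n+1}}\big(e-\tfrac12\mathbf 1\big)_{i_1i_2}\otimes\bar e_{i_2i_3}\otimes\bar e_{i_3i_4}\otimes\cdots\otimes\bar e_{i_{2n+1}i_1}\in A\otimes (A/\mathbb C1)^{\otimes 2n},$$ where $\bar e_{ij}$ denotes the image of $e_{ij}$ in $A/\mathbb C1$ and $c_n$ are nonzero normalisation constants. *)

From HB Require Import structures.
From mathcomp Require Import all_boot all_order all_algebra.
From mathcomp Require Import reals complex.
Set Implicit Arguments. Unset Strict Implicit. Unset Printing Implicit Defensive.
Import Order.TTheory GRing.Theory Num.Theory.
Local Open Scope ring_scope.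

Section Defs.
Variable R : realType.
Local Notation C := (R[i]).
Variable A : algType C.

Definition tildeA_rels (p q s : C) (xi eta zeta U V Z : A) : Prop :=
  zeta * xi = (q ^+ 2) *: (xi * zeta) /\
  eta * zeta = (q ^+ 2) *: (zeta * eta) /\
  xi * U = p *: (U * xi) /\
  V * xi = p *: (xi * V) /\
  eta * V = p *: (V * eta) /\
  U * eta = p *: (eta * U) /\
  U * V = V * U /\ U * zeta = zeta * U /\ V * zeta = zeta * V /\
  xi * eta = (zeta - 1) * (zeta + (s ^+ 2)%:A) + U * V /\
  eta * xi = ((q ^+ 2) *: zeta - 1) * ((q ^+ 2) *: zeta + (s ^+ 2)%:A) + U * V /\
  Z * xi = xi * Z /\ Z * eta = eta * Z /\ Z * zeta = zeta * Z /\
  Z * U = U * Z /\ Z * V = V * Z /\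
  Z ^+ 2 = U * V.

Definition tilde_e_num (q s : C) (xi eta zeta Z : A) (i j : nat) : A :=
  let a := (1 + s ^+ 2)%:A in
  let b := (1 - s ^+ 2)%:A in
  match i, j with
  | 0, 0 => a + Z *+ 2
  | 0, 2 => b - zeta *+ 2
  | 0, 3 => xi *+ 2
  | 1, 1 => a + Z *+ 2
  | 1, 2 => - (eta *+ 2)
  | 1, 3 => - b + ((q ^+ 2) *: zeta) *+ 2
  | 2, 0 => b - zeta *+ 2
  | 2, 1 => xi *+ 2
  | 2, 2 => a - Z *+ 2
  | 3, 0 => - (eta *+ 2)
  | 3, 1 => - b + ((q ^+ 2) *: zeta) *+ 2
  | 3, 3 => a - Z *+ 2
  | _, _ => 0
  end.

Definition tilde_e (q s : C) (xi eta zeta Z : A) : 'M[A]_4 :=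
  \matrix_(i < 4, j < 4)
    ((2 * (1 + s ^+ 2))^-1 *: tilde_e_num q s xi eta zeta Z i j).

Definition upd m (x : 'I_m -> A) (k : 'I_m) (y : A) : 'I_m -> A :=
  fun j => if j == k then y else x j.

Definition multilinear m (W : lmodType C) (phi : ('I_m -> A) -> W) : Prop :=
  forall (k : 'I_m) (x : 'I_m -> A) (a : C) (u v : A),
    phi (upd x k (a *: u + v)) = a *: phi (upd x k u) + phi (upd x k v).

(* phi factors through A (x) (A/C1)^{(x) m-1}: it kills 1 in every slot but
   the first (hence, by linearity, all of C1 in those slots). *)
Definition kills_scalars_tail m (W : lmodType C) (phi : ('I_m -> A) -> W)
  : Prop :=
  forall (k : 'I_m) (x : 'I_m -> A), (0 < (k : nat))%N -> phi (upd x k 1) = 0.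

(* Image of ch_n(E) under the linear map A (x) (A/C1)^{(x) 2n} -> W induced by
   phi:  c_n sum_{i} phi((e - 1/2)_{i_1 i_2}, e_{i_2 i_3}, ..., e_{i_{2n+1} i_1}). *)
Definition ch_eval (c : nat -> C) (e : 'M[A]_4) (n : nat) (W : lmodType C)
  (phi : ('I_(n.*2.+1) -> A) -> W) : W :=
  let eh := fun i j : 'I_4 => e i j - (if i == j then (2^-1 : C)%:A else 0) in
  c n *: \sum_(i : {ffun 'I_(n.*2.+1) -> 'I_4})
     phi (fun j => (if j == ord0 then eh (i j) (i (ordS j)) else e (i j) (i (ordS j)))).

End Defs.

From HB Require Import structures.
From mathcomp Require Import all_boot all_order all_algebra.
From mathcomp Require Import reals complex.
From Stdlib Require Import FunctionalExtensionality.
Set Implicit Arguments. Unset Strict Implicit. Unset Printing Implicit Defensive.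
Import Order.TTheory GRing.Theory Num.Theory.
Local Open Scope ring_scope.

(* Let sigma be the permutation i |-> i + 2 (mod 4) and eps = (1, 1, -1, -1).
   Conjugating e~ by the signed permutation matrix of (sigma, eps) gives 1 - e~:
   e~(sigma i, sigma j) = - eps_i eps_j e~(i, j) + delta_ij, which only needs
   1 + s^2 <> 0.  Since (1 - e~) - 1/2 = -(e~ - 1/2) and 1 - e~ = -e~ in A/C1,
   reindexing the sum defining ch_k by f |-> sigma o f multiplies each of its
   2k + 1 factors by a sign; the signs multiply to -1, so ch_k(e~) = -ch_k(e~). *)

Section MultilinearSlots.
Variables (R : realType) (A : algType R[i]) (m : nat) (W : lmodType R[i]).
Variable phi : ('I_m -> A) -> W.
Hypotheses (phi_ml : multilinear phi) (phi_tail : kills_scalars_tail phi).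

Lemma upd_id (x : 'I_m -> A) (k : 'I_m) : upd x k (x k) = x.
Proof. by apply: functional_extensionality => j; rewrite /upd; case: eqP => [->|]. Qed.

Lemma multilinear_upd0 (k : 'I_m) (x : 'I_m -> A) : phi (upd x k 0) = 0.
Proof.
have := phi_ml k x 1 0 0; rewrite scaler0 addr0 scale1r => E.
by apply: (addrI (phi (upd x k 0))); rewrite addr0 -E.
Qed.

Lemma multilinear_updZ (k : 'I_m) (x : 'I_m -> A) (a : R[i]) (u : A) :
  phi (upd x k (a *: u)) = a *: phi (upd x k u).
Proof. by have := phi_ml k x a u 0; rewrite addr0 multilinear_upd0 addr0. Qed.

Lemma multilinear_upd_affine (k : 'I_m) (x : 'I_m -> A) (a b : R[i]) :
  ((k : nat) = 0%N -> b = 0) -> phi (upd x k (a *: x k + b *: 1)) = a *: phi x.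
Proof.
move=> b0; rewrite phi_ml upd_id multilinear_updZ.
have [/b0->|k_gt0] := posnP k; first by rewrite scale0r addr0.
by rewrite phi_tail // scaler0 addr0.
Qed.

Lemma multilinear_affine_slots (x y : 'I_m -> A) (a b : 'I_m -> R[i]) :
  (forall j : 'I_m, (j : nat) = 0%N -> b j = 0) ->
  (forall j, y j = a j *: x j + b j *: 1) ->
  phi y = (\prod_j a j) *: phi x.
Proof.
move=> b0 yE; pose mix t (j : 'I_m) := if (j < t)%N then y j else x j.
suff mixE t : (t <= m)%N -> phi (mix t) = (\prod_(j : 'I_m | (j < t)%N) a j) *: phi x.
  have -> : y = mix m by apply: functional_extensionality => j; rewrite /mix ltn_ord.
  by rewrite mixE //; congr (_ *: _); apply: eq_bigl => j; rewrite ltn_ord.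
elim: t => [_|t IHt lt_tm].
  have -> : mix 0%N = x by [].
  by rewrite big_pred0 ?scale1r.
pose k := Ordinal lt_tm.
have mixS : mix t.+1 = upd (mix t) k (a k *: mix t k + b k *: 1).
  have -> : mix t k = x k by rewrite /mix ltnn.
  apply: functional_extensionality => j; rewrite /upd -yE {1}/mix ltnS leq_eqVlt.
  by case: (eqVneq j k) => [->|]; rewrite ?eqxx // -val_eqE /= => /negPf->.
rewrite mixS multilinear_upd_affine; last exact: b0.
rewrite IHt 1?ltnW // scalerA [in RHS](bigD1 k) //=.
congr (_ * _ *: _); apply: eq_bigl => j.
by rewrite ltnS -val_eqE /= ltn_neqAle andbC.
Qed.

End MultilinearSlots.

Lemma prod_opp_cyclic_odd (K : comRingType) m (g : 'I_m -> K) :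
  odd m -> (forall j, g j ^+ 2 = 1) -> \prod_j - (g j * g (ordS j)) = -1.
Proof.
move=> m_odd g_sqr; rewrite prodrN card_ord -signr_odd m_odd expr1 big_split /=.
rewrite -(reindex_inj (@ordS_inj m) (F := g) (P := xpredT)) -big_split /=.
under eq_bigr => j _ do rewrite -expr2 g_sqr.
by rewrite big1_eq mulN1r.
Qed.

Section ComplementSymmetry.
Variables (R : realType) (A : algType R[i]).
Variables (e : 'M[A]_4) (sigma : 'I_4 -> 'I_4) (eps : 'I_4 -> R[i]).
Hypotheses (sigmaK : involutive sigma) (eps_sqr : forall i, eps i ^+ 2 = 1).
Hypothesis e_sigma :
  forall i j, e (sigma i) (sigma j) = - (eps i * eps j) *: e i j + (i == j)%:R *: 1.

Let eh i j := e i j - (if i == j then (2^-1 : R[i])%:A else 0).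

Lemma eh_sigma i j : eh (sigma i) (sigma j) = - (eps i * eps j) *: eh i j.
Proof.
rewrite /eh e_sigma (inj_eq (inv_inj sigmaK)) scalerBr.
have [<-|_] := eqVneq i j; rewrite /= ?scale0r ?scaler0 ?subr0 ?addr0 //.
rewrite -expr2 eps_sqr !scaleN1r opprK -addrA -scalerBl.
by rewrite {1}(splitr 1) mul1r addrK.
Qed.

Lemma ch_eval_complement_sym (c : nat -> R[i]) n (W : lmodType R[i])
    (phi : ('I_(n.*2.+1) -> A) -> W) :
  multilinear phi -> kills_scalars_tail phi -> ch_eval c e phi = 0.
Proof.
move=> phi_ml phi_tail; rewrite /ch_eval.
set S := \sum_(f : {ffun _ -> 'I_4}) _; suff -> : S = 0 by rewrite scaler0.
pose sigma_f (f : {ffun 'I_(n.*2.+1) -> 'I_4}) := [ffun j => sigma (f j)].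
have sigma_fK : involutive sigma_f by move=> f; apply/ffunP => j; rewrite !ffunE sigmaK.
have S_opp : S = - S.
  rewrite {1}/S (reindex_inj (inv_inj sigma_fK)) -sumrN; apply: eq_bigr => f _.
  pose b (j : 'I_(n.*2.+1)) : R[i] := if j == ord0 then 0 else (f j == f (ordS j))%:R.
  pose x j := if j == ord0 then eh (f j) (f (ordS j)) else e (f j) (f (ordS j)).
  rewrite (multilinear_affine_slots phi_ml phi_tail (x := x)
    (a := fun j => - (eps (f j) * eps (f (ordS j)))) (b := b)).
  - by rewrite prod_opp_cyclic_odd ?scaleN1r //= odd_double.
  - by move=> j /= j0; rewrite /b ifT //; apply/eqP/val_inj.
  - move=> j; rewrite /b /x !ffunE; case: ifP => _; last exact: e_sigma.
    by rewrite scale0r addr0; exact: (eh_sigma (f j) (f (ordS j))).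
by move/eqP: S_opp; rewrite -addr_eq0 -mulr2n -scaler_nat scaler_eq0 pnatr_eq0 => /eqP.
Qed.

End ComplementSymmetry.

Definition half_swap (i : 'I_4) : 'I_4 := Ordinal (ltn_pmod (i + 2) (isT : (0 < 4)%N)).

Lemma half_swapK : involutive half_swap.
Proof. by case=> [[|[|[|[|?]]]] ?] //; apply: val_inj. Qed.

Definition half_sign {K : pzRingType} (i : 'I_4) : K := if (i < 2)%N then 1 else -1.

Lemma half_sign_sqr (K : pzRingType) (i : 'I_4) : half_sign i ^+ 2 = 1 :> K.
Proof. by rewrite /half_sign; case: ifP; rewrite ?sqrrN expr1n. Qed.

Section TildeE.
Variables (R : realType) (A : algType R[i]).
Variables (q s : R[i]) (xi eta zeta Z : A).

Lemma tilde_e_num_half_swap i j :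
  tilde_e_num q s xi eta zeta Z (half_swap i) (half_swap j) =
  - (half_sign i * half_sign j) *: tilde_e_num q s xi eta zeta Z i j
  + (i == j)%:R *: ((1 + s ^+ 2) *+ 2)%:A.
Proof.
have diag_minus (u v : A) : u - v = - (u + v) + u *+ 2.
  by rewrite mulr2n opprD addrAC addKr.
have diag_plus (u v : A) : u + v = - (u - v) + u *+ 2.
  by rewrite mulr2n opprD opprK addrAC addKr.
case: i => [[|[|[|[|?]]]] ?] //; case: j => [[|[|[|[|?]]]] ?] //;
  rewrite /half_sign /= ?mulr1 ?mulrN1 ?mulN1r ?opprK ?scaleN1r ?scale1r ?scale0r
    ?addr0 ?scaler0 ?oppr0 //.
all: by rewrite -scalerMnl; first [exact: diag_minus | exact: diag_plus].
Qed.

Lemma tilde_e_half_swap i j : 1 + s ^+ 2 != 0 ->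
  tilde_e q s xi eta zeta Z (half_swap i) (half_swap j) =
  - (half_sign i * half_sign j) *: tilde_e q s xi eta zeta Z i j + (i == j)%:R *: 1.
Proof.
move=> s2_neq0; rewrite !mxE tilde_e_num_half_swap scalerDr !scalerA mulrC.
congr (_ *: _ + _ *: 1); rewrite -[(1 + s ^+ 2) *+ 2]mulr_natl mulrCA mulVf ?mulr1 //.
by rewrite mulf_neq0 ?pnatr_eq0.
Qed.

End TildeE.

Theorem mainTheorem4 (R : realType) (p q s : R[i])
  (hp : p != 0) (hq : q != 0) (hs : s ^+ 2 != -1)
  (A : algType R[i]) (xi eta zeta U V Z : A)
  (hA : tildeA_rels p q s xi eta zeta U V Z)
  (c : nat -> R[i]) (hc : forall n, c n != 0) :
  forall (k : nat) (W : lmodType R[i]) (phi : ('I_(k.*2.+1) -> A) -> W),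
    multilinear phi -> kills_scalars_tail phi ->
    ch_eval c (tilde_e q s xi eta zeta Z) phi = 0.
Proof.
move=> k W phi phi_ml phi_tail.
have s2_neq0 : 1 + s ^+ 2 != 0 by rewrite addrC addr_eq0.
apply: (ch_eval_complement_sym half_swapK (half_sign_sqr _)) => // i j.
exact: tilde_e_half_swap.
Qed.
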